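(* If $X \subset S^{\mathbb{Z}}$ is a one-dimensional sofic shift, then its Cantor–Bendixson derivative $X^{(1)}$ is also a sofic shift.
   Context: A one-dimensional subshift over a finite alphabet $S$ is a closed, shift-invariant subset of $S^{\mathbb{Z}}$. A sofic shift is the image of a subshift of finite type (a subshift defined by a finite set of forbidden words) under a block map (a continuous shift-commuting map). The Cantor–Bendixson derivative $X^{(1)} = X'$ is the set of non-isolated points of $X$, i.e. $\{x \in X \mid x \in \overline{X \setminus \{x\}}\}$. *)

From mathcomp Require Import all_boot.
From Stdlib Require Import ZArith.

Set Implicit Arguments.
Unset Strict Implicit.
Unset Printing Implicit Defensive.

Definition config (S : Type) := Z -> S.
Definition cset (S : Type) := config S -> Prop.

Definition shift (S : Type) (x : config S) : config S := fun i => x (i + 1)%Z.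

Definition agree (S : Type) (n : nat) (x y : config S) : Prop :=
  forall i : Z, (Z.abs i <= Z.of_nat n)%Z -> x i = y i.

(* Product topology (S discrete), written via cylinder neighbourhoods. *)
Definition closed_set (S : Type) (X : cset S) : Prop :=
  forall x, (forall n, exists y, X y /\ agree n x y) -> X x.

Definition shift_invariant (S : Type) (X : cset S) : Prop :=
  (forall x, X x -> X (shift x)) /\
  (forall y, X y -> exists x, X x /\ (forall i, shift x i = y i)).

Definition subshift (S : Type) (X : cset S) : Prop :=
  closed_set X /\ shift_invariant X.

Fixpoint occurs_at (S : Type) (x : config S) (i : Z) (w : seq S) : Prop :=
  match w with
  | [::] => True
  | a :: w' => x i = a /\ occurs_at x (i + 1)%Z w'
  end.

Definition SFT (A : finType) (Y : cset A) : Prop :=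
  exists F : seq (seq A),
    forall y, Y y <-> (forall w, w \in F -> forall i, ~ occurs_at y i w).

Definition continuous_map (A S : Type) (phi : config A -> config S) : Prop :=
  forall (x : config A) (n : nat), exists m : nat,
    forall y, agree m x y -> agree n (phi x) (phi y).

Definition block_map (A S : Type) (phi : config A -> config S) : Prop :=
  continuous_map phi /\ (forall x i, phi (shift x) i = shift (phi x) i).

Definition sofic (S : finType) (X : cset S) : Prop :=
  exists (A : finType) (Y : cset A) (phi : config A -> config S),
    SFT Y /\ block_map phi /\
    (forall x, X x <-> exists y, Y y /\ (forall i, phi y i = x i)).

Definition CB_derivative (S : Type) (X : cset S) : cset S :=
  fun x => X x /\
    forall n : nat, exists y, X y /\ (exists j, y j <> x j) /\ agree n x y.

(* Write X = phi(Y) with Y a subshift of finite type and phi a block map.  After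
   establishing that Y has a gluing window L (two points of Y agreeing on a window of
   width 2L+1 may be spliced there) and that phi has a finite radius r, we cut points
   of Y into blocks of width 2(r+L+1)+1.  A point x of X is non-isolated iff points of
   X agree with x on arbitrarily large windows and differ outside; these differences
   lie either to the right or to the left for arbitrarily large windows.  We build a
   finite graph whose vertices are pairs (H, s), where H is a set of blocks all reading
   s and containing two blocks that can be legally continued to the right into different
   readings.  Labels of its bi-infinite paths are non-isolated points of X (gluing and
   compactness), and every point of the first kind is such a label, along the path
   whose i-th vertex is the set of blocks at i that extend with reading x arbitrarily
   far to the left.  Reflecting the whole situation handles the second kind, and the
   disjoint union of the two graphs is a vertex shift with a one-block labelling,
   hence a sofic presentation of X'. *)
From Stdlib Require Import ZArith Lia ClassicalEpsilon Classical FunctionalExtensionality.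
From mathcomp Require Import all_boot zify.

Set Implicit Arguments.
Unset Strict Implicit.
Unset Printing Implicit Defensive.

(* The classical truth value of a proposition, to define finite sets by arbitrary
   (undecidable) properties. *)
Definition classicb (P : Prop) : bool :=
  if excluded_middle_informative P then true else false.

Lemma classicbP (P : Prop) : classicb P = true <-> P.
Proof. by rewrite /classicb; case: excluded_middle_informative. Qed.

Definition translate (A : Type) (k : Z) (y : config A) : config A := fun i => y (i + k)%Z.

(* Agreement on the open window (-n, n); unlike [agree], vacuous for n = 0. *)
Definition agree_lt (A : Type) (n : nat) (x y : config A) : Prop :=
  forall i : Z, (Z.abs i < Z.of_nat n)%Z -> x i = y i.

(** * Compactness of A^Z *)

Lemma pigeonhole_antitone (T : finType) (Q : nat -> T -> Prop) :
  (forall n m t, n <= m -> Q m t -> Q n t) ->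
  (forall n, exists t, Q n t) -> exists t, forall n, Q n t.
Proof.
move=> Qanti Qall; apply: NNPP => Hnone.
have Hfail t : exists N, ~ Q N t.
  apply: NNPP => H; apply: Hnone; exists t => n.
  by apply: NNPP => Hn; apply: H; exists n.
pose N t := proj1_sig (constructive_indefinite_description _ (Hfail t)).
have [t Ht] := Qall (\max_t N t).
apply: (proj2_sig (constructive_indefinite_description _ (Hfail t))).
exact: Qanti (leq_bigmax t) Ht.
Qed.

Lemma pigeonhole_frequent (T : finType) (P : nat -> Prop) (f : nat -> T) :
  (forall N, exists k, N <= k /\ P k) ->
  exists t, forall N, exists k, N <= k /\ P k /\ f k = t.
Proof.
move=> Pinf.
apply: (@pigeonhole_antitone T (fun N t => exists k, N <= k /\ P k /\ f k = t)).
  move=> n m t le [k [Hk [Pk fk]]]; exists k; split=> //; exact: leq_trans Hk.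
by move=> n; have [k [Hk Pk]] := Pinf n; exists (f k), k.
Qed.

Section ClusterPoint.
(* Every sequence in A^Z has a cluster point: the product of finite sets is
   sequentially compact.  The point is built window by window. *)
Variable A : finType.
Variable z : nat -> config A.

Definition frequent_agree (c : config A) (n : nat) :=
  forall N, exists k, N <= k /\ agree_lt n c (z k).

Lemma frequent_agree_extend c n :
  frequent_agree c n -> exists c', agree_lt n c c' /\ frequent_agree c' n.+1.
Proof.
move=> H.
have [t Ht] := pigeonhole_frequent (fun k => (z k (- Z.of_nat n)%Z, z k (Z.of_nat n))) H.
have [k0 [_ [Hk0 Ek0]]] := Ht 0.
exists (z k0); split => // N.
have [k [Hk [Ak Ek]]] := Ht N.
exists k; split => // i Hi.
have [Hi'|Hi'] : (Z.abs i < Z.of_nat n \/ Z.abs i = Z.of_nat n)%Z by lia.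
  by rewrite -(Hk0 i Hi') (Ak i Hi').
rewrite -Ek in Ek0; case: Ek0 => E1 E2.
have [->|->] : (i = - Z.of_nat n \/ i = Z.of_nat n)%Z by lia.
  by rewrite E1.
by rewrite E2.
Qed.

Lemma frequent_agree0 : frequent_agree (z 0) 0.
Proof. by move=> N; exists N; split => // i Hi; lia. Qed.

Fixpoint approx (n : nat) : {c : config A | frequent_agree c n} :=
  match n with
  | 0 => exist _ (z 0) frequent_agree0
  | m.+1 => let: exist c h := approx m in
      let ex := constructive_indefinite_description _ (frequent_agree_extend h) in
      exist _ (proj1_sig ex) (proj2 (proj2_sig ex))
  end.

Lemma approx_coherent n m :
  n <= m -> agree_lt n (proj1_sig (approx n)) (proj1_sig (approx m)).
Proof.
elim: m => [|m IH]; first by rewrite leqn0 => /eqP->.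
rewrite leq_eqVlt => /orP [/eqP->|]; first by [].
rewrite ltnS => Hnm i Hi; rewrite (IH Hnm i Hi) /=.
case: (approx m) => c h /=.
case: (constructive_indefinite_description _ _) => c' [Hc' _] /=.
apply: Hc'; lia.
Qed.

Definition cluster_point : config A :=
  fun i => proj1_sig (approx (Z.to_nat (Z.abs i)).+1) i.

Lemma cluster_pointP n N : exists k, N <= k /\ agree_lt n cluster_point (z k).
Proof.
have [k [Hk Ak]] := proj2_sig (approx n) N.
exists k; split => // i Hi; rewrite -Ak // /cluster_point.
have [le|lt] := leqP (Z.to_nat (Z.abs i)).+1 n; last by lia.
by rewrite (approx_coherent le) //; lia.
Qed.
End ClusterPoint.

(** * Block maps are sliding block codes *)

(* By compactness, a continuous map is uniformly continuous: the 0-th coordinate of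
   the image only depends on a fixed window of the argument. *)
Lemma continuous_uniform_at0 (A S : finType) (phi : config A -> config S) :
  continuous_map phi ->
  exists r : nat, forall y y', agree r y y' -> phi y 0%Z = phi y' 0%Z.
Proof.
move=> Hc; apply: NNPP => Hno.
have Hbad r : exists p : config A * config A,
    agree r p.1 p.2 /\ phi p.1 0%Z <> phi p.2 0%Z.
  apply: NNPP => H; apply: Hno; exists r => y y' Ha.
  by apply: NNPP => Hne; apply: H; exists (y, y').
pose q r := proj1_sig (constructive_indefinite_description _ (Hbad r)).
have Hq r : agree r (q r).1 (q r).2 /\ phi (q r).1 0%Z <> phi (q r).2 0%Z.
  exact: (proj2_sig (constructive_indefinite_description _ (Hbad r))).
pose p := cluster_point (fun r i => ((q r).1 i, (q r).2 i)).
pose y := fun i => (p i).1.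
have [m Hm] := Hc y 0.
have [k [Hk Ak]] := cluster_pointP (fun r i => ((q r).1 i, (q r).2 i)) m.+1 m.
have [Hqa Hqb] := Hq k.
have E1 : agree m y (q k).1 by move=> i Hi; rewrite /y /p (Ak i) //; lia.
have E2 : agree m y (q k).2 by move=> i Hi; rewrite (E1 i Hi); apply: Hqa; lia.
apply: Hqb.
by rewrite -(Hm _ E1 0%Z ltac:(lia)) -(Hm _ E2 0%Z ltac:(lia)).
Qed.

Lemma block_map_translate (A S : Type) (phi : config A -> config S) :
  block_map phi -> forall k y i, phi (translate k y) i = phi y (i + k)%Z.
Proof.
move=> [_ Hs].
have Hpos (n : nat) y i :
    phi (translate (Z.of_nat n) y) i = phi y (i + Z.of_nat n)%Z.
  elim: n y i => [|n IH] y i.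
    have -> : translate (Z.of_nat 0) y = y.
      by apply: functional_extensionality => j; rewrite /translate Z.add_0_r.
    by rewrite Z.add_0_r.
  have -> : translate (Z.of_nat n.+1) y = shift (translate (Z.of_nat n) y).
    by apply: functional_extensionality => j; rewrite /translate /shift; congr y; lia.
  by rewrite Hs /shift IH; congr phi; lia.
move=> k y i; case: (Z_le_gt_dec 0 k) => Hk.
  by rewrite (_ : k = Z.of_nat (Z.to_nat k)); [apply: Hpos | lia].
have Hy : y = translate (Z.of_nat (Z.to_nat (- k))) (translate k y).
  by apply: functional_extensionality => j; rewrite /translate; congr y; lia.
by rewrite [in RHS]Hy Hpos; congr phi; lia.
Qed.

(* Curtis-Hedlund-Lyndon: a block map has a finite radius r. *)
Lemma block_map_local (A S : finType) (phi : config A -> config S) :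
  block_map phi -> exists r : nat, forall y y' i,
    (forall k, (Z.abs (k - i) <= Z.of_nat r)%Z -> y k = y' k) -> phi y i = phi y' i.
Proof.
move=> Hb; have [r Hr] := continuous_uniform_at0 (proj1 Hb).
exists r => y y' i H.
rewrite -[i]Z.add_0_l -!(block_map_translate Hb).
by apply: Hr => k Hk; rewrite /translate; apply: H; lia.
Qed.

(** * Gluing in subshifts of finite type *)

Lemma occurs_at_translate (A : Type) (y : config A) k w i :
  occurs_at (translate k y) i w <-> occurs_at y (i + k)%Z w.
Proof.
elim: w i => [|a w IH] i //=.
by rewrite IH /translate; have -> : (i + 1 + k = i + k + 1)%Z by lia.
Qed.

Lemma occurs_at_ext (A : Type) (y y' : config A) w i :
  (forall j, (i <= j < i + Z.of_nat (size w))%Z -> y j = y' j) ->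
  occurs_at y i w -> occurs_at y' i w.
Proof.
elim: w i => [|a w IH] i //= H [H1 H2]; split; first by rewrite -H //; lia.
by apply: IH => // j Hj; apply: H; lia.
Qed.

Definition splice (A : Type) (y z : config A) (c : Z) : config A :=
  fun k => if (k <? c)%Z then y k else z k.

Section SFTGluing.
Variables (A : finType) (F : seq (seq A)) (Y : cset A).
Hypothesis HY : forall y, Y y <-> (forall w, w \in F -> forall i, ~ occurs_at y i w).

Lemma SFT_translate k y : Y y -> Y (translate k y).
Proof. by move/HY => H; apply/HY => w Hw i; rewrite occurs_at_translate; exact: H. Qed.

Definition window := \max_(w <- F) size w.

Lemma forbidden_size w : w \in F -> size w <= window.
Proof. by move=> Hw; exact: (@leq_bigmax_seq _ _ _ (fun w => size w)). Qed.

(* Two points of Y agreeing on a window of width 2 window + 1 around c can be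
   spliced at c: every forbidden word fits on one side of c. *)
Lemma SFT_splice y z c :
  Y y -> Y z ->
  (forall k, (c - Z.of_nat window <= k <= c + Z.of_nat window)%Z -> y k = z k) ->
  Y (splice y z c).
Proof.
move=> /HY Hy /HY Hz Hag; apply/HY => w Hw i Hocc.
have Hs : (Z.of_nat (@size A w) <= Z.of_nat window)%Z by apply/inj_le/leP/forbidden_size.
case: (Z_lt_le_dec i (c - Z.of_nat window)) => Hi.
  apply: (Hy w Hw i); apply: (occurs_at_ext _ Hocc) => j Hj.
  by rewrite /splice (_ : (j <? c)%Z = true) //; apply/Z.ltb_lt; lia.
apply: (Hz w Hw i); apply: (occurs_at_ext _ Hocc) => j Hj.
rewrite /splice; case: (Z.ltb_spec j c) => Hjc //.
by apply: Hag; lia.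
Qed.

(* A forbidden occurrence is seen on a finite window, so SFTs are closed. *)
Lemma SFT_closed : closed_set Y.
Proof.
move=> x H; apply/HY => w Hw i Hocc.
have [y [/HY Hy Ha]] := H (Z.to_nat (Z.abs i + Z.of_nat (@size A w))).
apply: (Hy w Hw i); apply: (occurs_at_ext _ Hocc) => j Hj.
by apply: Ha; lia.
Qed.
End SFTGluing.

Definition mirror (T : Type) (x : config T) : config T := fun i => x (- i)%Z.

Lemma mirrorK (T : Type) (x : config T) : mirror (mirror x) = x.
Proof. by apply: functional_extensionality => i; rewrite /mirror Z.opp_involutive. Qed.

Lemma mirror_translate (T : Type) k (y : config T) :
  mirror (translate k y) = translate (- k) (mirror y).
Proof.
by apply: functional_extensionality => i; rewrite /mirror /translate; congr y; lia.
Qed.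

Lemma mirror_splice (T : Type) (y z : config T) c :
  mirror (splice y z c) = splice (mirror z) (mirror y) (1 - c).
Proof.
apply: functional_extensionality => i; rewrite /mirror /splice.
by case: (Z.ltb_spec (- i) c); case: (Z.ltb_spec i (1 - c)) => // H1 H2; lia.
Qed.

(* Reflection is a homeomorphism, so it preserves non-isolated points. *)
Lemma CB_mirror (S : Type) (X : cset S) x :
  CB_derivative X x -> CB_derivative (fun y => X (mirror y)) (mirror x).
Proof.
move=> [Hx Hn]; split; first by rewrite mirrorK.
move=> n; have [y [Hy [[j Hj] Ha]]] := Hn n.
exists (mirror y); split; first by rewrite mirrorK.
split; first by exists (- j)%Z; rewrite /mirror Z.opp_involutive.
by move=> i Hi; rewrite /mirror; apply: Ha; lia.
Qed.

Lemma CB_mirrorK (S : Type) (X : cset S) x :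
  CB_derivative (fun y => X (mirror y)) (mirror x) -> CB_derivative X x.
Proof.
move/CB_mirror; rewrite mirrorK.
by have -> : (fun y => X (mirror (mirror y))) = X
  by apply: functional_extensionality => y; rewrite mirrorK.
Qed.

Definition right_limit (S : Type) (X : cset S) (x : config S) : Prop :=
  forall N : nat, exists n, N <= n /\ exists y, X y /\ agree n x y /\
    exists j, (Z.of_nat n < j)%Z /\ y j <> x j.

Lemma CB_right_or_left (S : Type) (X : cset S) x : CB_derivative X x ->
  right_limit X x \/ right_limit (fun y => X (mirror y)) (mirror x).
Proof.
move=> [Hx Hn]; case: (classic (right_limit X x)) => Hr; [by left | right].
have [N0 HN0] : exists N0, forall n, N0 <= n -> ~ exists y, X y /\ agree n x y /\
    exists j, (Z.of_nat n < j)%Z /\ y j <> x j.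
  apply: NNPP => H; apply: Hr => N; apply: NNPP => H'; apply: H; exists N => n Hn2 Hex.
  by apply: H'; exists n.
move=> N; exists (maxn N N0); split; first exact: leq_maxl.
have [y [Hy [[j Hj] Ha]]] := Hn (maxn N N0).
have Hj' : (Z.of_nat (maxn N N0) < Z.abs j)%Z.
  by apply: NNPP => Hc; apply: Hj; symmetry; apply: Ha; lia.
case: (Z_lt_le_dec 0 j) => Hj0.
  case: (HN0 (maxn N N0) (leq_maxr _ _)); exists y; do 2 split => //.
  by exists j; split => //; lia.
exists (mirror y); split; first by rewrite mirrorK.
split; first by move=> i Hi; rewrite /mirror; apply: Ha; lia.
by exists (- j)%Z; split; [lia | rewrite /mirror Z.opp_involutive].
Qed.

(** * Sofic shifts presented by labelled graphs *)

Definition path_labels (T S : Type) (edge : T -> T -> bool) (lbl : T -> S) : cset S :=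
  fun x => exists w : config T,
    (forall i, edge (w i) (w (i + 1)%Z)) /\ forall i, lbl (w i) = x i.

Lemma sofic_ext (S : finType) (X X' : cset S) :
  (forall x, X x <-> X' x) -> sofic X -> sofic X'.
Proof.
move=> E [A [Y [phi [HY [Hphi HX]]]]]; exists A, Y, phi; do 2 split => //.
by move=> x; rewrite -E.
Qed.

(* Paths of a finite graph form an SFT (forbidden words: non-edges) and the vertex
   labelling is a one-block map. *)
Lemma path_labels_sofic (S T : finType) (edge : T -> T -> bool) (lbl : T -> S) :
  sofic (path_labels edge lbl).
Proof.
exists T, (fun w => forall i, edge (w i) (w (i + 1)%Z)), (fun w i => lbl (w i)).
split.
  exists [seq [:: p.1; p.2] | p <- enum [pred p : T * T | ~~ edge p.1 p.2]] => y; split.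
    move=> H u /mapP [p Hp ->] i /= [E1 [E2 _]].
    by move: Hp; rewrite mem_enum inE -E1 -E2 H.
  move=> H i; apply: NNPP => /negP Hn.
  apply: (H [:: y i; y (i + 1)%Z] _ i); last by split; [|split].
  by apply/mapP; exists (y i, y (i + 1)%Z) => //; rewrite mem_enum inE.
split; first by split => // x n; exists n => y H i Hi /=; rewrite H.
by move=> x; split; move=> [w [H1 H2]]; exists w.
Qed.

Lemma path_labels_mirror (T S : Type) (edge : T -> T -> bool) (lbl : T -> S) x :
  path_labels (fun u v => edge v u) lbl x <-> path_labels edge lbl (mirror x).
Proof.
split=> [] [w [Hw Hl]]; exists (mirror w); split => i; rewrite /mirror.
- by have := Hw (- (i + 1))%Z; rewrite (_ : (- (i + 1) + 1 = - i)%Z) //; lia.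
- by rewrite Hl.
- by have := Hw (- (i + 1))%Z; rewrite (_ : (- (i + 1) + 1 = - i)%Z) //; lia.
- by rewrite Hl /mirror Z.opp_involutive.
Qed.

Definition sum_edge (T1 T2 : Type) (e1 : T1 -> T1 -> bool) (e2 : T2 -> T2 -> bool)
    (u v : T1 + T2) : bool :=
  match u, v with
  | inl a, inl b => e1 a b
  | inr a, inr b => e2 a b
  | _, _ => false
  end.

Definition sum_label (T1 T2 S : Type) (l1 : T1 -> S) (l2 : T2 -> S) (u : T1 + T2) : S :=
  match u with inl a => l1 a | inr a => l2 a end.

Lemma sum_path_component (T1 T2 : Type) e1 e2 (w : config (T1 + T2)) :
  (forall i, sum_edge e1 e2 (w i) (w (i + 1)%Z)) ->
  forall i,
    (if w i is inl _ then true else false) = (if w 0%Z is inl _ then true else false).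
Proof.
move=> Hw; pose side i := if w i is inl _ then true else false.
have Hstep i : side i = side (i + 1)%Z.
  by have := Hw i; rewrite /side; case: (w i) => a; case: (w (i + 1)%Z).
apply: (Z.peano_ind (fun i => side i = side 0%Z)) => //= i <-.
- by rewrite (Hstep i) Z.add_1_r.
- by rewrite (Hstep (Z.pred i)) Z.add_1_r Z.succ_pred.
Qed.

Lemma path_labels_sum (T1 T2 S : Type) e1 e2 (l1 : T1 -> S) (l2 : T2 -> S) x :
  path_labels (sum_edge e1 e2) (sum_label l1 l2) x <->
  path_labels e1 l1 x \/ path_labels e2 l2 x.
Proof.
split; last first.
  by case=> [] [w [Hw Hl]]; [exists (fun i => inl (w i)) | exists (fun i => inr (w i))].
move=> [w [Hw Hl]]; have Hside := sum_path_component Hw.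
case E0 : (w 0%Z) => [a0|a0]; [left | right].
- exists (fun i => if w i is inl a then a else a0).
  have Ew i : w i = inl (if w i is inl a then a else a0).
    by have := Hside i; rewrite E0; case: (w i).
  split => i; last by rewrite -Hl (Ew i).
  by have := Hw i; rewrite (Ew i) (Ew (i + 1)%Z).
- exists (fun i => if w i is inr a then a else a0).
  have Ew i : w i = inr (if w i is inr a then a else a0).
    by have := Hside i; rewrite E0; case: (w i).
  split => i; last by rewrite -Hl (Ew i).
  by have := Hw i; rewrite (Ew i) (Ew (i + 1)%Z).
Qed.

Definition right_graph (S T : Type) (X : cset S) (edge : T -> T -> bool) (lbl : T -> S) :=
  (forall x, path_labels edge lbl x -> CB_derivative X x) /\
  (forall x, CB_derivative X x -> right_limit X x -> path_labels edge lbl x).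

Lemma CB_sofic_of_right_graphs (S T1 T2 : finType) (X : cset S)
    (e1 : T1 -> T1 -> bool) (l1 : T1 -> S) (e2 : T2 -> T2 -> bool) (l2 : T2 -> S) :
  right_graph X e1 l1 -> right_graph (fun y => X (mirror y)) e2 l2 ->
  sofic (CB_derivative X).
Proof.
move=> [Sound1 Compl1] [Sound2 Compl2].
apply: (sofic_ext _
  (path_labels_sofic (sum_edge e1 (fun u v => e2 v u)) (sum_label l1 l2))).
move=> x; rewrite path_labels_sum (path_labels_mirror e2); split.
  by case=> [H | H]; [exact: Sound1 | apply: CB_mirrorK; exact: Sound2].
move=> Hx; case: (CB_right_or_left Hx) => Hr; [left | right].
  exact: Compl1.
by apply: Compl2 => //; exact: CB_mirror.
Qed.

(** * Factor maps with a gluing window and a finite radius *)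

Definition presentation (A S : Type) (Y : cset A) (phi : config A -> config S)
    (L r : nat) : Prop :=
  [/\ forall k y, Y y -> Y (translate k y),
      forall y z c, Y y -> Y z ->
        (forall k, (c - Z.of_nat L <= k <= c + Z.of_nat L)%Z -> y k = z k) ->
        Y (splice y z c),
      closed_set Y,
      forall y y' i, (forall k, (Z.abs (k - i) <= Z.of_nat r)%Z -> y k = y' k) ->
        phi y i = phi y' i
    & forall k y i, phi (translate k y) i = phi y (i + k)%Z].

Lemma SFT_presentation (A S : finType) (Y : cset A) (phi : config A -> config S) :
  SFT Y -> block_map phi -> exists L r, presentation Y phi L r.
Proof.
move=> [F HF] Hb; have [r Hloc] := block_map_local Hb.
exists (window F), r; split => //.
- exact: SFT_translate HF.
- exact: SFT_splice HF.
- exact: SFT_closed HF.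
- exact: block_map_translate Hb.
Qed.

Definition mirror_map (A S : Type) (phi : config A -> config S) : config A -> config S :=
  fun y i => phi (mirror y) (- i)%Z.

Lemma presentation_mirror (A S : Type) (Y : cset A) (phi : config A -> config S) L r :
  presentation Y phi L r ->
  presentation (fun y => Y (mirror y)) (mirror_map phi) L.+1 r.
Proof.
move=> [Htr Hsp Hcl Hloc Hsh]; split.
- by move=> k y; rewrite mirror_translate; apply: Htr.
- move=> y z c Hy Hz Ha; rewrite mirror_splice; apply: Hsp => // k Hk.
  by rewrite /mirror; symmetry; apply: Ha; lia.
- move=> x H; apply: Hcl => n; have [y [Hy Ha]] := H n; exists (mirror y); split => //.
  by move=> i Hi; rewrite /mirror; apply: Ha; lia.
- by move=> y y' i H; apply: Hloc => k Hk; rewrite /mirror; apply: H; lia.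
- by move=> k y i; rewrite /mirror_map mirror_translate Hsh; congr phi; lia.
Qed.

Lemma image_mirror (A S : Type) (X : cset S) (Y : cset A) (phi : config A -> config S) :
  (forall x, X x <-> exists y, Y y /\ forall i, phi y i = x i) ->
  forall x, X (mirror x) <->
    exists y, Y (mirror y) /\ forall i, mirror_map phi y i = x i.
Proof.
move=> HX x; rewrite HX; split=> [] [y [Hy Hl]]; exists (mirror y); rewrite ?mirrorK.
  by split => // i; rewrite /mirror_map mirrorK Hl /mirror Z.opp_involutive.
by split => // i; rewrite [RHS]/mirror -Hl /mirror_map Z.opp_involutive.
Qed.

(** * The right graph of a factor map *)

Section RightGraph.
Variables (A S : finType) (X : cset S) (Y : cset A).
Variables (phi : config A -> config S) (L r : nat).
Hypothesis HX : forall x, X x <-> exists y, Y y /\ forall i, phi y i = x i.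
Hypothesis Y_translate : forall k y, Y y -> Y (translate k y).
Hypothesis Y_splice : forall y z c, Y y -> Y z ->
  (forall k, (c - Z.of_nat L <= k <= c + Z.of_nat L)%Z -> y k = z k) -> Y (splice y z c).
Hypothesis Y_closed : closed_set Y.
Hypothesis phi_local : forall y y' i,
  (forall k, (Z.abs (k - i) <= Z.of_nat r)%Z -> y k = y' k) -> phi y i = phi y' i.
Hypothesis phi_translate : forall k y i, phi (translate k y) i = phi y (i + k)%Z.

(* Blocks have radius rad = r + L + 1: wide enough to determine phi at their centre,
   and two consecutive blocks overlap on a window wide enough to splice. *)
Definition rad := (r + L).+1.
Definition block := {ffun 'I_(2 * rad).+1 -> A}.

Definition block_at (i : Z) (y : config A) : block :=
  [ffun k : 'I_(2 * rad).+1 => y (i - Z.of_nat rad + Z.of_nat k)%Z].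

Lemma block_at_ext i y y' :
  (forall q, (i - Z.of_nat rad <= q <= i + Z.of_nat rad)%Z -> y q = y' q) ->
  block_at i y = block_at i y'.
Proof. by move=> H; apply/ffunP => k; rewrite !ffunE; apply: H; have := ltn_ord k; lia. Qed.

Lemma block_at_translate i y : block_at 0 (translate i y) = block_at i y.
Proof. by apply/ffunP => k; rewrite !ffunE /translate; congr y; lia. Qed.

Definition overlap (s t : block) : bool :=
  [forall k : 'I_(2 * rad), s (inord k.+1) == t (inord k)].

Lemma overlap_block_at i y : overlap (block_at i y) (block_at (i + 1) y).
Proof.
apply/forallP => k; rewrite !ffunE; have := ltn_ord k => Hk.
by rewrite !inordK; try lia; apply/eqP; congr y; lia.
Qed.

Lemma overlap_agree z w m : overlap (block_at m z) (block_at (m + 1) w) ->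
  forall q, (m + 1 - Z.of_nat rad <= q <= m + Z.of_nat rad)%Z -> z q = w q.
Proof.
move=> H q Hq.
have Hk : (Z.to_nat (q - m - 1 + Z.of_nat rad) < 2 * rad)%N by lia.
have E : nat_of_ord (Ordinal Hk) = Z.to_nat (q - m - 1 + Z.of_nat rad) by [].
move/forallP: H => /(_ (Ordinal Hk)) /eqP; rewrite !ffunE E !inordK; try lia.
rewrite (_ : (m - Z.of_nat rad + Z.of_nat (Z.to_nat (q - m - 1 + Z.of_nat rad)).+1 = q)%Z);
  last by lia.
by rewrite (_ : (m + 1 - Z.of_nat rad +
                Z.of_nat (Z.to_nat (q - m - 1 + Z.of_nat rad)) = q)%Z); last by lia.
Qed.

Definition legal (b : block) : Prop := exists y, Y y /\ block_at 0 y = b.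

Lemma legal_block_at i y : Y y -> legal (block_at i y).
Proof.
by move=> Hy; exists (translate i y); split; [exact: Y_translate | exact: block_at_translate].
Qed.

Definition reading (b : block) : S :=
  phi (fun k => b (inord (Z.to_nat (k + Z.of_nat rad)))) 0%Z.

Lemma phi_reading y i : phi y i = reading (block_at i y).
Proof.
rewrite /reading -[i]Z.add_0_l -phi_translate.
apply: phi_local => k Hk; rewrite /translate ffunE inordK; last by rewrite /rad; lia.
by congr y; rewrite /rad; lia.
Qed.

Definition legal_chain (c : nat -> block) (d : nat) : Prop :=
  (forall k, k < d -> overlap (c k) (c k.+1)) /\ (forall k, k <= d -> legal (c k)).

(* Legal chains are realized by points of Y: this is where gluing is used. *)
Lemma legal_chain_realize d p (c : nat -> block) : legal_chain c d ->
  exists z, Y z /\ forall k, k <= d -> block_at (p + Z.of_nat k) z = c k.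
Proof.
elim: d => [|d IH] [Hc Ho].
  have [y [Hy Hb]] := Ho 0 (leqnn 0).
  exists (translate (- p) y); split; first exact: Y_translate.
  move=> k; rewrite leqn0 => /eqP ->; rewrite -Hb -block_at_translate.
  by apply/ffunP => j; rewrite !ffunE /translate; congr y; lia.
have [z [Hz Hb]] := IH (conj (fun k Hk => Hc k (ltnW Hk)) (fun k Hk => Ho k (leqW Hk))).
have [y [Hy Hyb]] := Ho d.+1 (leqnn _).
pose y2 := translate (- (p + Z.of_nat d.+1)) y.
have Hb2 : block_at (p + Z.of_nat d.+1) y2 = c d.+1.
  rewrite -Hyb -block_at_translate.
  by apply/ffunP => j; rewrite !ffunE /y2 /translate; congr y; lia.
have Hover : overlap (block_at (p + Z.of_nat d) z) (block_at (p + Z.of_nat d + 1) y2).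
  rewrite Hb // (_ : (p + Z.of_nat d + 1 = p + Z.of_nat d.+1)%Z); last by lia.
  by rewrite Hb2; exact: Hc.
have Hag := overlap_agree Hover.
exists (splice z y2 (p + Z.of_nat d + 1)); split.
  apply: Y_splice => //; first exact: Y_translate.
  by move=> k Hk; apply: Hag; rewrite /rad; lia.
move=> k Hk; case: (ltnP d k) => Hdk.
  rewrite (_ : k = d.+1) -?Hb2; last by lia.
  apply: block_at_ext => q Hq; rewrite /splice.
  by case: (Z.ltb_spec q (p + Z.of_nat d + 1)) => Hq' //; apply: Hag; lia.
rewrite -(Hb k Hdk); apply: block_at_ext => q Hq; rewrite /splice.
by case: (Z.ltb_spec q (p + Z.of_nat d + 1)) => Hq' //; symmetry; apply: Hag; lia.
Qed.

Definition diverging (H : {set block}) : Prop :=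
  exists d (c1 c2 : nat -> block), c1 0 \in H /\ c2 0 \in H /\
    legal_chain c1 d /\ legal_chain c2 d /\ reading (c1 d) <> reading (c2 d).

Definition vertex := ({set block} * S)%type.

Definition vertex_ok (H : {set block}) (s : S) : bool :=
  [&& H != set0, classicb (diverging H)
    & [forall b in H, classicb (legal b) && (reading b == s)]].

Definition edge (u v : vertex) : bool :=
  [&& vertex_ok u.1 u.2, vertex_ok v.1 v.2
    & [forall b in v.1, [exists a in u.1, overlap a b]]].

Section Soundness.
Variable w : config vertex.
Hypothesis Hw : forall i, edge (w i) (w (i + 1)%Z).
Let x : config S := fun i => (w i).2.
Let h i := (w i).1.

Lemma path_vertex_ok i : vertex_ok (h i) (x i).
Proof. by have /and3P [] := Hw i. Qed.

Lemma path_block i b : b \in h i -> legal b /\ reading b = x i.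
Proof.
have /and3P [_ _ /forall_inP H] := path_vertex_ok i.
by move=> /H /andP [/classicbP Ho /eqP Hl].
Qed.

Lemma path_block_pred i b : b \in h (i + 1)%Z -> exists a, a \in h i /\ overlap a b.
Proof.
have /and3P [_ _ /forall_inP H] := Hw i.
by move=> /H /exists_inP [a Ha Hc]; exists a.
Qed.

Lemma backtrace n i b : b \in h i -> exists c : nat -> block, c n = b /\
  (forall k, k <= n -> c k \in h (i - Z.of_nat n + Z.of_nat k)%Z) /\
  (forall k, k < n -> overlap (c k) (c k.+1)).
Proof.
elim: n i b => [|n IH] i b Hb.
  exists (fun _ => b); split => //; split => // k Hk.
  by rewrite (_ : (i - Z.of_nat 0 + Z.of_nat k = i)%Z) //; lia.
have [a [Ha Hab]] := path_block_pred (i := (i - 1)%Z) (b := b)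
  ltac:(by rewrite (_ : (i - 1 + 1 = i)%Z) //; lia).
have [c [Hcn [Hcm Hcc]]] := IH _ _ Ha.
exists (fun k => if k == n.+1 then b else c k); split; first by rewrite eqxx.
split=> k Hk; case: eqP => [E|Hne].
- by rewrite E (_ : (i - Z.of_nat n.+1 + Z.of_nat n.+1 = i)%Z) //; lia.
- rewrite (_ : (i - Z.of_nat n.+1 + Z.of_nat k = i - 1 - Z.of_nat n + Z.of_nat k)%Z);
    last by lia.
  by apply: Hcm; lia.
- by lia.
case: eqP => [E|E]; last by apply: Hcc; lia.
by rewrite (_ : k = n) ?Hcn //; lia.
Qed.

Lemma glue_past (n d : nat) (c : nat -> block) :
  c 0 \in h (Z.of_nat n) -> legal_chain c d ->
  exists z, Y z /\
    (forall q, (- Z.of_nat n <= q <= Z.of_nat n)%Z -> block_at q z \in h q) /\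
    block_at (Z.of_nat n + Z.of_nat d) z = c d.
Proof.
move=> H0 [Hc Ho].
have [cb [Hcbn [Hcbm Hcbc]]] := backtrace (n + n) H0.
have Hin k : k <= n + n -> cb k \in h (- Z.of_nat n + Z.of_nat k)%Z.
  move=> Hk; have := Hcbm k Hk.
  rewrite (_ : (Z.of_nat n - Z.of_nat (n + n) + Z.of_nat k = - Z.of_nat n + Z.of_nat k)%Z) //.
  by lia.
pose e k := if k <= n + n then cb k else c (k - (n + n)).
have e_past k : k <= n + n -> e k = cb k by move=> Hk; rewrite /e Hk.
have e_future k : n + n <= k -> e k = c (k - (n + n)).
  rewrite /e leq_eqVlt => /orP [/eqP <-|Hk]; first by rewrite leqnn subnn Hcbn.
  by rewrite leqNgt Hk.
have He : legal_chain e (n + n + d).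
  split=> k Hk.
    case: (ltnP k (n + n)) => Hk1; first by rewrite !e_past ?(ltnW Hk1) //; exact: Hcbc.
    rewrite !e_future ?subSn //; [apply: Hc | exact: leqW]; lia.
  case: (leqP k (n + n)) => Hk1.
    by rewrite e_past //; exact: (proj1 (path_block (Hin k Hk1))).
  by rewrite e_future ?(ltnW Hk1) //; apply: Ho; lia.
have [z [Hz Hzb]] := legal_chain_realize (- Z.of_nat n) He.
exists z; split => //; split.
  move=> q Hq; have Hk : (Z.to_nat (q + Z.of_nat n) <= n + n)%N by lia.
  rewrite -(_ : (- Z.of_nat n + Z.of_nat (Z.to_nat (q + Z.of_nat n)) = q)%Z); last by lia.
  by rewrite Hzb ?e_past //; first exact: Hin; lia.
have := Hzb (n + n + d) (leqnn _).
rewrite (_ : (- Z.of_nat n + Z.of_nat (n + n + d) = Z.of_nat n + Z.of_nat d)%Z); last by lia.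
by rewrite e_future ?leq_addr // addKn.
Qed.

Lemma chain_continuation (n d : nat) (c : nat -> block) :
  c 0 \in h (Z.of_nat n) -> legal_chain c d ->
  exists z, Y z /\ (forall q, (- Z.of_nat n <= q <= Z.of_nat n)%Z -> phi z q = x q) /\
    phi z (Z.of_nat n + Z.of_nat d)%Z = reading (c d).
Proof.
move=> H0 Hc; have [z [Hz [Hpast Hend]]] := glue_past H0 Hc.
exists z; split => //; split; last by rewrite phi_reading Hend.
by move=> q Hq; rewrite phi_reading; case: (path_block (Hpast q Hq)).
Qed.

(* By compactness, x itself is in X. *)
Lemma path_label_in_X : X x.
Proof.
have Happrox (n : nat) : exists z, Y z /\
    forall q, (- Z.of_nat n <= q <= Z.of_nat n)%Z -> phi z q = x q.
  have /and3P [/set0Pn [b Hb] _ _] := path_vertex_ok (Z.of_nat n).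
  have [|z [Hz [Hq _]]] := @chain_continuation n 0 (fun _ => b) Hb; last by exists z.
  by split => // k _; exact: (proj1 (path_block Hb)).
pose zs n := proj1_sig (constructive_indefinite_description _ (Happrox n)).
have Hzs n : Y (zs n) /\
    forall q, (- Z.of_nat n <= q <= Z.of_nat n)%Z -> phi (zs n) q = x q.
  exact: (proj2_sig (constructive_indefinite_description _ (Happrox n))).
apply/HX; exists (cluster_point zs); split.
  apply: Y_closed => m; have [k [_ Ak]] := cluster_pointP zs m.+1 0.
  by exists (zs k); split; [exact: (proj1 (Hzs k)) | move=> i Hi; apply: Ak; lia].
move=> i.
have [k [Hk Ak]] := cluster_pointP zs (Z.to_nat (Z.abs i) + r).+1 (Z.to_nat (Z.abs i)).
rewrite (phi_local (y' := zs k)); first by apply: (proj2 (Hzs k)); lia.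
by move=> q Hq; apply: Ak; lia.
Qed.

(* Divergence of h n yields points of X agreeing with x on [-n, n] but not equal to x. *)
Lemma path_label_nonisolated n :
  exists y, X y /\ (exists j, y j <> x j) /\ agree n x y.
Proof.
have /and3P [_ /classicbP [d [c1 [c2 [H1 [H2 [Hc1 [Hc2 Hne]]]]]]] _] :=
  path_vertex_ok (Z.of_nat n).
have [z1 [Hz1 [Hq1 He1]]] := chain_continuation H1 Hc1.
have [z2 [Hz2 [Hq2 He2]]] := chain_continuation H2 Hc2.
have Hag z : (forall q, (- Z.of_nat n <= q <= Z.of_nat n)%Z -> phi z q = x q) ->
    agree n x (phi z).
  by move=> H q Hq; symmetry; apply: H; lia.
have HXphi z : Y z -> X (phi z) by move=> Hz; apply/HX; exists z.
case: (classic (phi z1 (Z.of_nat n + Z.of_nat d)%Z = x (Z.of_nat n + Z.of_nat d)%Z)) => E.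
  exists (phi z2); split; first exact: HXphi.
  split; last exact: Hag.
  by exists (Z.of_nat n + Z.of_nat d)%Z; rewrite -E He1 He2 => H; apply: Hne.
exists (phi z1); split; first exact: HXphi.
by split; [exists (Z.of_nat n + Z.of_nat d)%Z | exact: Hag].
Qed.

Lemma path_label_CB : CB_derivative X x.
Proof. by split; [exact: path_label_in_X | exact: path_label_nonisolated]. Qed.
End Soundness.

Section Completeness.
(* A right limit point x = phi y0 of X is the label of the path i |-> (H_i, x_i),
   where H_i is the set of blocks at i of preimages of points agreeing with x on
   arbitrarily long windows ending at i. *)
Variable x : config S.
Variable y0 : config A.
Hypothesis Hy0 : Y y0.
Hypothesis Hx : forall i, phi y0 i = x i.
Hypothesis Hright : right_limit X x.

Definition compatible (n : nat) (i : Z) (b : block) : Prop :=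
  exists z, Y z /\ block_at i z = b /\
    forall k, (- Z.of_nat n <= k <= i)%Z -> phi z k = x k.

Definition past_blocks (i : Z) : {set block} :=
  [set b | classicb (forall n, compatible n i b)].

Lemma past_blocksP i b : b \in past_blocks i <-> forall n, compatible n i b.
Proof. by rewrite inE; exact: classicbP. Qed.

Lemma past_blocks_y0 i : block_at i y0 \in past_blocks i.
Proof. by apply/past_blocksP => n; exists y0; do 2 split => // k _; exact: Hx. Qed.

Lemma past_blocks_reading i b : b \in past_blocks i -> legal b /\ reading b = x i.
Proof.
move/past_blocksP/(_ (Z.to_nat (Z.abs i))) => [z [Hz [<- Hk]]].
by split; [exact: legal_block_at | rewrite -phi_reading; apply: Hk; lia].
Qed.

(* By compactness, every block of H_(i+1) follows some block of H_i. *)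
Lemma past_blocks_pred i b :
  b \in past_blocks (i + 1)%Z -> exists a, a \in past_blocks i /\ overlap a b.
Proof.
move/past_blocksP => Hb.
pose Q n a := exists z, Y z /\ block_at (i + 1) z = b /\ block_at i z = a /\
   forall k, (- Z.of_nat n <= k <= i + 1)%Z -> phi z k = x k.
have [a Ha] : exists a, forall n, Q n a.
  apply: (@pigeonhole_antitone block Q).
    move=> n m a le [z [Hz [E1 [E2 Hk]]]]; exists z; do 3 split => //.
    by move=> k Hk'; apply: Hk; lia.
  by move=> n; have [z [Hz [E1 Hk]]] := Hb n; exists (block_at i z), z.
exists a; split.
  apply/past_blocksP => n; have [z [Hz [E1 [E2 Hk]]]] := Ha n.
  by exists z; do 2 split => //; move=> k Hk'; apply: Hk; lia.
by have [z [Hz [<- [<- _]]]] := Ha 0; exact: overlap_block_at.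
Qed.

Lemma legal_chain_block_at y i d :
  Y y -> legal_chain (fun k => block_at (i + Z.of_nat k) y) d.
Proof.
move=> Hy; split => k _; last exact: legal_block_at.
by rewrite (_ : (i + Z.of_nat k.+1 = i + Z.of_nat k + 1)%Z); [exact: overlap_block_at | lia].
Qed.

(* Being a right limit point makes H_i diverging: by compactness, some block of H_i
   extends to points whose images agree with x up to i and differ from it at some j >= i,
   while the block of y0 at i extends along y0 with reading x. *)
Lemma past_blocks_diverging i : diverging (past_blocks i).
Proof.
pose Q n b := exists z, Y z /\ block_at i z = b /\
   (forall k, (- Z.of_nat n <= k <= i)%Z -> phi z k = x k) /\
   exists j, (i <= j)%Z /\ phi z j <> x j.
have [b Hb] : exists b, forall n, Q n b.
  apply: (@pigeonhole_antitone block Q).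
    move=> n m b le [z [Hz [E1 [Hk Hj]]]]; exists z; do 2 split => //; split => //.
    by move=> k Hk'; apply: Hk; lia.
  move=> n; have [n' [Hn' [y [/HX [z [Hz Ez]] [Ha [j [Hj Hyj]]]]]]] :=
    Hright (n + Z.to_nat (Z.abs i)).
  exists (block_at i z), z; split => //; split => //; split.
    by move=> k Hk; rewrite Ez; symmetry; apply: Ha; lia.
  by exists j; split; [lia | rewrite Ez].
have [z [Hz [E1 [_ [j [Hij Hj]]]]]] := Hb 0.
exists (Z.to_nat (j - i)), (fun k => block_at (i + Z.of_nat k) z),
  (fun k => block_at (i + Z.of_nat k) y0).
rewrite Z.add_0_r E1 -!phi_reading (_ : (i + Z.of_nat (Z.to_nat (j - i)) = j)%Z);
  last by lia.
split; first by apply/past_blocksP => n; have [z' [Hz' [E1' [Hk _]]]] := Hb n; exists z'.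
split; first exact: past_blocks_y0.
by do 2 (split; first exact: legal_chain_block_at); rewrite Hx.
Qed.

Lemma past_blocks_vertex_ok i : vertex_ok (past_blocks i) (x i).
Proof.
apply/and3P; split.
- by apply/set0Pn; exists (block_at i y0); exact: past_blocks_y0.
- by apply/classicbP; exact: past_blocks_diverging.
apply/forall_inP => b /past_blocks_reading [Ho Hl].
by apply/andP; split; [apply/classicbP | apply/eqP].
Qed.

Lemma right_limit_path : path_labels edge snd x.
Proof.
exists (fun i => (past_blocks i, x i)); split => // i; apply/and3P.
split; try exact: past_blocks_vertex_ok.
apply/forall_inP => b /past_blocks_pred [a [Ha Hc]]; apply/exists_inP; by exists a.
Qed.
End Completeness.

Lemma right_graph_vertex : right_graph X edge snd.
Proof.
split.
  move=> x [w [Hw Hl]]; have -> : x = fun i => (w i).2.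
    by apply: functional_extensionality => i; rewrite -Hl.
  exact: path_label_CB.
by move=> x [/HX [y0 [Hy0 Hx]] _] Hr; exact: right_limit_path Hx Hr.
Qed.
End RightGraph.

Lemma presentation_right_graph (A S : finType) (X : cset S) (Y : cset A)
    (phi : config A -> config S) L r :
  presentation Y phi L r -> (forall x, X x <-> exists y, Y y /\ forall i, phi y i = x i) ->
  exists (T : finType) (e : T -> T -> bool) (lbl : T -> S), right_graph X e lbl.
Proof.
case=> Htr Hsp Hcl Hloc Hsh HX.
by do 3 eexists; exact: right_graph_vertex HX Htr Hsp Hcl Hloc Hsh.
Qed.

Theorem corollary4 (S : finType) (X : cset S) :
  sofic X -> sofic (CB_derivative X).
Proof.
move=> [A [Y [phi [HY [Hphi HX]]]]].
have [L [r Hpres]] := SFT_presentation HY Hphi.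
have [T1 [e1 [l1 G1]]] := presentation_right_graph Hpres HX.
have [T2 [e2 [l2 G2]]] :=
  presentation_right_graph (presentation_mirror Hpres) (image_mirror HX).
exact: CB_sofic_of_right_graphs G1 G2.
Qed.
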